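(* Let $G$ be a vigorous subgroup of $\operatorname{Homeo}(\mathfrak{C})$ generated by its elements of small support. Let $B,C,D\in K_{\mathfrak{C}}$ be pairwise disjoint with $B\cup C\cup D=\mathfrak{C}$. Let $\delta\in\operatorname{pstab}_G(D)$ satisfy $B\delta\subsetneq B$. Let $\varepsilon:\mathfrak{C}\to\mathfrak{C}$ be the injective map agreeing with $\delta$ on $B$ and equal to the identity on $C\cup D$. Let $f:\operatorname{Homeo}(\mathfrak{C})\to\operatorname{Homeo}(\mathfrak{C})$ send $\gamma$ to the homeomorphism which, for $p\in\mathfrak{C}\varepsilon$, maps $p$ to $((p\varepsilon^{-1})\gamma)\varepsilon$, and fixes every point of $\mathfrak{C}\setminus\mathfrak{C}\varepsilon$. Then $f|_G$ is an isomorphism from $G$ onto $\operatorname{pstab}_G(\mathfrak{C}\setminus\mathfrak{C}\varepsilon)$.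
   Context: $\mathfrak{C}$ denotes a Cantor space (a space homeomorphic to $\{0,1\}^\omega$). Groups of homeomorphisms act on the right, and products are composed left to right. $K_{\mathfrak{C}}$ denotes the set of non-empty proper clopen subsets of $\mathfrak{C}$. For $\gamma\in\operatorname{Homeo}(\mathfrak{C})$, $\operatorname{supp}(\gamma)=\{p\in\mathfrak{C}: p\gamma\neq p\}$. For $G\le\operatorname{Homeo}(\mathfrak{C})$ and $A\subseteq\mathfrak{C}$, $\operatorname{pstab}_G(A)=\{g\in G: pg=p \text{ for all } p\in A\}$. A subset $S\subseteq \operatorname{Homeo}(\mathfrak{C})$ is vigorous if for all clopen $A,B,C\subseteq\mathfrak{C}$ with $B,C$ non-empty proper subsets of $A$ there is $\gamma\in S$ with $\operatorname{supp}(\gamma)\subseteq A$ and $B\gamma\subseteq C$. $G$ is generated by its elements of small support if $G$ is generated by $\{\gamma\in G: \operatorname{supp}(\gamma)\subseteq A \text{ for some } A\in K_{\mathfrak{C}}\}$. *)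

From HB Require Import structures.
From mathcomp Require Import all_boot all_order all_algebra.
From mathcomp Require Import all_classical all_reals all_analysis.
Set Implicit Arguments. Unset Strict Implicit. Unset Printing Implicit Defensive.
Local Open Scope classical_set_scope.

Notation CC := cantor_space.

Definition is_homeo (g : CC -> CC) : Prop :=
  continuous g /\ exists h : CC -> CC, continuous h /\ cancel g h /\ cancel h g.

(* Right actions, products composed left to right: p (g * h) = (p g) h. *)
Definition hmul (g h : CC -> CC) : CC -> CC := h \o g.

Definition is_subgroup (G : set (CC -> CC)) : Prop :=
  [/\ G `<=` is_homeo, G id,
      (forall g h, G g -> G h -> G (hmul g h)) &
      (forall g h, G g -> cancel g h -> cancel h g -> G h)].

Definition KC (A : set CC) : Prop := clopen A /\ A !=set0 /\ A != setT.

Definition supp (g : CC -> CC) : set CC := [set p | g p <> p].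

Definition pstab (G : set (CC -> CC)) (A : set CC) : set (CC -> CC) :=
  [set g | G g /\ forall p, A p -> g p = p].

Definition vigorous (S : set (CC -> CC)) : Prop :=
  forall A B C : set CC, clopen A -> clopen B -> clopen C ->
    B !=set0 -> C !=set0 -> B `<` A -> C `<` A ->
    exists2 g, S g & supp g `<=` A /\ g @` B `<=` C.

Definition small_support_elts (G : set (CC -> CC)) : set (CC -> CC) :=
  [set g | G g /\ exists A, KC A /\ supp g `<=` A].

Definition gen_by_small_support (G : set (CC -> CC)) : Prop :=
  forall H, is_subgroup H -> small_support_elts G `<=` H -> G `<=` H.

From HB Require Import structures.
From mathcomp Require Import all_boot all_order all_algebra.
From mathcomp Require Import all_classical all_reals all_analysis.
Local Open Scope classical_set_scope.
Set Implicit Arguments. Unset Strict Implicit.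

(* Since f g acts on R as eps^-1 g eps and trivially off R, f is an injective
   homomorphism by pure algebra (section Transfer); what remains is that f
   maps G into pstab_G(CC \ R), and onto it.

   Into: the elements g of G with f g in G form a subgroup.  It contains every
   element fixing B (f leaves it unchanged, as eps is the identity off B) and
   every element fixing C (f conjugates it by delta, as delta agrees with eps
   on B u D).  Vigour lets us conjugate any element of small support into one
   of these two kinds, so generation by small support gives all of G.

   Onto: R^c = B \ delta B is clopen.  An element h fixing R^c and also a
   clopen E with E n R, R \ E non-empty is an image: conjugating E over eps B
   by some f g reduces to an element fixing B.  A general h of pstab_G(R^c)
   is split, via an element t given by vigour, into a product of two such
   elements; the required sets come from the four clopen blocks
   delta(B \ delta B), delta(delta B), C and D into which R decomposes. *)

Lemma properW (T : Type) (S U : set T) p : S `<=` U -> U p -> ~ S p -> S `<` U.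
Proof. by move=> SU Up nSp; split => // US; exact/nSp/US. Qed.

Lemma disjointP (T : Type) (S U : set T) : S `&` U = set0 -> forall p, S p -> ~ U p.
Proof. by move=> SU0 p Sp Up; have : (S `&` U) p by []; rewrite SU0. Qed.

Lemma subgroup_inv G g : is_subgroup G -> G g ->
  exists2 gi, G gi & cancel g gi /\ cancel gi g.
Proof.
move=> [homeo _ _ inv] Gg; have [_ [gi [_ [c1 c2]]]] := homeo _ Gg.
by exists gi => //; apply: (inv g).
Qed.

Lemma subgroup_comp3 G a b c : is_subgroup G -> G a -> G b -> G c -> G (c \o b \o a).
Proof. by move=> [_ _ mul _] Ga Gb Gc; apply: (mul (hmul a b) c) => //; apply: mul. Qed.

Lemma subgroup_homeo G g : is_subgroup G -> G g -> is_homeo g.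
Proof. by case=> homeo _ _ _; exact: homeo. Qed.

Lemma supp_fix (A : set CC) g : supp g `<=` A -> forall p, ~ A p -> g p = p.
Proof. by move=> sA p nAp; apply: contrapT => gp; exact/nAp/sA. Qed.

Lemma fix_outside_stable (A : set CC) g gi : cancel g gi ->
  (forall p, ~ A p -> g p = p) -> forall p, A p -> A (g p).
Proof.
move=> c gfix p Ap; apply: contrapT => nA.
have gp : g p = p by apply: (can_inj c); exact: gfix.
by apply: nA; rewrite gp.
Qed.

Lemma homeo_image_clopen g (S : set CC) : is_homeo g -> clopen S -> clopen (g @` S).
Proof.
move=> [_ [gi [cgi [c1 c2]]]] clS.
have -> : g @` S = gi @^-1` S.
  apply/seteqP; split => p; first by case=> q Sq <-; rewrite /preimage /= c1.
  by move=> Sp; exists (gi p) => //; rewrite c2.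
exact: preimage_clopen.
Qed.

Section Transfer.
Variables (eps : CC -> CC) (f : (CC -> CC) -> (CC -> CC)).
Hypothesis f_range : forall g q, f g (eps q) = eps (g q).
Hypothesis f_off : forall g p, ~ range eps p -> f g p = p.

Lemma f_id : f id = id.
Proof.
apply: funext => p; case: (pselect (range eps p)) => [[q _ <-]|np].
  by rewrite f_range.
by rewrite f_off.
Qed.

Lemma f_mul g h : f (hmul g h) = hmul (f g) (f h).
Proof.
apply: funext => p; case: (pselect (range eps p)) => [[q _ <-]|np].
  by rewrite /hmul /= !f_range.
by rewrite /hmul /= !f_off.
Qed.

Lemma f_cancel g gi : cancel g gi -> cancel (f g) (f gi).
Proof.
move=> c p; have := congr1 (fun k => k p) (f_mul g gi).
rewrite /hmul /= => <-.
have -> : gi \o g = id by apply: funext => x; rewrite /= c.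
by rewrite f_id.
Qed.

Hypothesis eps_inj : injective eps.

Lemma f_inj g h : f g = f h -> g = h.
Proof. by move=> e; apply: funext => q; apply: eps_inj; rewrite -!f_range e. Qed.

Lemma f_agree (A : set CC) u ui g gi : cancel u ui -> cancel ui u ->
  (forall q, A q -> u q = eps q) -> (forall p, ~ A p -> g p = p) ->
  cancel g gi -> f g = u \o g \o ui.
Proof.
move=> cu cui uA gfix cg.
apply: funext => p; case: (pselect (range eps p)) => [[q _ <-]|np].
  rewrite f_range /=; case: (pselect (A q)) => Aq.
    by rewrite -(uA _ Aq) cu uA //; exact: (fix_outside_stable cg).
  have nA : ~ A (ui (eps q)).
    by move=> Aa; apply: Aq; have := uA _ Aa; rewrite cui => /eps_inj ->.
  by rewrite (gfix _ nA) cui (gfix _ Aq).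
have nA : ~ A (ui p).
  by move=> Aa; apply: np; exists (ui p) => //; rewrite -uA // cui.
by rewrite f_off //= (gfix _ nA) cui.
Qed.

End Transfer.

Section Lemma2p10.
Variables (G : set (CC -> CC)) (B C D : set CC) (delta eps : CC -> CC)
  (f : (CC -> CC) -> (CC -> CC)).
Hypotheses (G_sub : is_subgroup G) (G_vig : vigorous G)
  (G_gen : gen_by_small_support G).
Hypotheses (KB : KC B) (KC_C : KC C) (KD : KC D).
Hypotheses (BC0 : B `&` C = set0) (BD0 : B `&` D = set0) (CD0 : C `&` D = set0)
  (BCD : B `|` C `|` D = setT).
Hypotheses (delta_D : pstab G D delta) (delta_B : delta @` B `<` B).
Hypotheses (eps_B : forall p, B p -> eps p = delta p)
  (eps_CD : forall p, (C `|` D) p -> eps p = p).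
Hypotheses (f_range : forall g q, f g (eps q) = eps (g q))
  (f_off : forall g p, ~ range eps p -> f g p = p).

Lemma cover p : B p \/ C p \/ D p.
Proof. by have : [set: CC] p by []; rewrite -BCD; case=> [[]|]; tauto. Qed.

Lemma notB_CD p : ~ B p -> (C `|` D) p.
Proof. by case: (cover p) => [//|[Cp|Dp]] _; [left|right]. Qed.

Lemma notC_BD p : ~ C p -> (B `|` D) p.
Proof. by case: (cover p) => [Bp|[//|Dp]] _; [left|right]. Qed.

Lemma delta_mapsB p : B p -> B (delta p).
Proof. by move=> Bp; apply: delta_B.1; exists p. Qed.

Lemma eps_B_iff q : B (eps q) <-> B q.
Proof.
split; last by move=> Bq; rewrite eps_B //; exact: delta_mapsB.
by case: (pselect (B q)) => // nBq; rewrite eps_CD //; exact: notB_CD.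
Qed.

(* eps is injective: it is delta on B, the identity off B, and preserves B. *)
Lemma eps_inj : injective eps.
Proof.
move=> p q e; have [di _ [cd _]] := subgroup_inv G_sub delta_D.1.
case: (pselect (B p)) => Bp.
  have Bq : B q by apply/eps_B_iff; rewrite -e; apply/eps_B_iff.
  by apply: (can_inj cd); rewrite -!eps_B.
have nBq : ~ B q by move/eps_B_iff; rewrite -e => /eps_B_iff.
by rewrite -(eps_CD (notB_CD Bp)) -(eps_CD (notB_CD nBq)).
Qed.

(* An element fixing B is supported in C u D, where eps is the identity, so
   f leaves it unchanged. *)
Lemma f_fixB g : G g -> (forall p, B p -> g p = p) -> f g = g.
Proof.
move=> Gg gB; have [gi _ [cg _]] := subgroup_inv G_sub Gg.
rewrite (f_agree f_range f_off eps_inj (A := C `|` D) (u := id) (ui := id) (gi := gi)) //.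
- by move=> q CDq; rewrite eps_CD.
- by move=> p nCD; apply: gB; apply: contrapT => /notB_CD.
Qed.

(* An element fixing C is supported in B u D, where eps agrees with delta, so
   f conjugates it by delta inside G. *)
Lemma f_fixC g : G g -> (forall p, C p -> g p = p) -> G (f g).
Proof.
move=> Gg gC; have [gi _ [cg _]] := subgroup_inv G_sub Gg.
have [Gd dD] := delta_D; have [di Gdi [cd1 cd2]] := subgroup_inv G_sub Gd.
rewrite (f_agree f_range f_off eps_inj (A := B `|` D) cd1 cd2 (gi := gi)) //.
- exact: subgroup_comp3.
- by move=> q [Bq|Dq]; [rewrite eps_B | rewrite dD // eps_CD //; right].
- by move=> p nBD; apply: gC; apply: contrapT => /notC_BD.
Qed.

Definition transferable : set (CC -> CC) := [set g | G g /\ G (f g)].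

Lemma transferable_subgroup : is_subgroup transferable.
Proof.
have [homeo G1 Gmul Ginv] := G_sub; split.
- by move=> g [Gg _]; exact: homeo.
- by split => //; rewrite (f_id f_range f_off).
- move=> g h [Gg Gfg] [Gh Gfh]; split; first exact: Gmul.
  by rewrite (f_mul f_range f_off); exact: Gmul.
- move=> g h [Gg Gfg] c1 c2; split; first exact: (Ginv g).
  by apply: (Ginv (f g)) => //; apply: (f_cancel f_range f_off).
Qed.

Lemma transferable_fixB g : G g -> (forall p, B p -> g p = p) -> transferable g.
Proof. by move=> Gg gB; split; rewrite // f_fixB. Qed.

Lemma transferable_fixC g : G g -> (forall p, C p -> g p = p) -> transferable g.
Proof. by move=> Gg gC; split => //; exact: f_fixC. Qed.

Lemma transferable_conj (S A : set CC) t g :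
  transferable t -> t @` S `<=` ~` A -> G g -> (forall p, ~ A p -> g p = p) ->
  (forall k, G k -> (forall p, S p -> k p = p) -> transferable k) ->
  transferable g.
Proof.
move=> Tt tSA Gg gfix Tfix; have [Gt _] := Tt.
have [ti Gti [c1 c2]] := subgroup_inv G_sub Gt.
have [_ _ Tmul Tinv] := transferable_subgroup.
have Tti : transferable ti := Tinv t ti Tt c1 c2.
have Tk : transferable (ti \o g \o t).
  apply: Tfix; first exact: subgroup_comp3.
  by move=> p Sp; rewrite /= gfix ?c1 //; apply: tSA; exists p.
have -> : g = hmul (hmul ti (ti \o g \o t)) t.
  by apply: funext => p; rewrite /hmul /= !c2.
by apply: (Tmul) => //; apply: (Tmul).
Qed.

(* Every element of small support is transferable: vigour provides a
   conjugator moving C (or B) off its support. *)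
Lemma small_support_transferable : small_support_elts G `<=` transferable.
Proof.
move=> g [Gg [A [[clA [_ AT]] sA]]]; have gfix := supp_fix sA.
have [d Dd] := KD.2.1.
have nCd : ~ C d by move=> Cd; exact: (disjointP CD0 Cd Dd).
have nBd : ~ B d by move=> Bd; exact: (disjointP BD0 Bd Dd).
have clCD : clopen (C `|` D) by apply: clopenU; [exact: KC_C.1|exact: KD.1].
have clBD : clopen (B `|` D) by apply: clopenU; [exact: KB.1|exact: KD.1].
case: (pselect (C `<=` ~` A)) => [CA|nCA].
  by apply: transferable_fixC => // p /CA; exact: gfix.
case: (pselect (exists p, ~ A p /\ (C `|` D) p)) => [[p0 [nAp0 CDp0]]|noCD].
- have CDprop : ~` A `&` (C `|` D) `<` C `|` D.
    split=> [x []//|CDA]; apply: nCA => x Cx; exact: (CDA x (or_introl Cx)).1.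
  have [t Gt [st tC]] := G_vig clCD KC_C.1 (clopenI (clopenC A clA) clCD)
    KC_C.2.1 (ex_intro _ p0 (conj nAp0 CDp0))
    (properW (fun x Cx => or_introl Cx) (or_intror Dd) nCd) CDprop.
  apply: (transferable_conj (S := C) (A := A) (t := t)) => //.
  + apply: transferable_fixB => // p Bp; apply: (supp_fix st).
    by case=> [Cp|Dp]; [exact: (disjointP BC0 Bp Cp)|exact: (disjointP BD0 Bp Dp)].
  + by move=> x /tC [].
  + exact: transferable_fixC.
- have nAB p : ~ A p -> B p.
    by move=> nAp; apply: contrapT => /notB_CD CDp; apply: noCD; exists p.
  have [a nAa] := (setTPn A).1 AT.
  have [t Gt [st tB]] := G_vig clBD KB.1 (clopenC A clA) KB.2.1 (ex_intro _ a nAa)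
    (properW (fun x Bx => or_introl Bx) (or_intror Dd) nBd)
    (properW (fun x nAx => or_introl (nAB x nAx)) (or_intror Dd) (fun nAd => nBd (nAB d nAd))).
  apply: (transferable_conj (S := B) (A := A) (t := t)) => //.
  + apply: transferable_fixC => // p Cp; apply: (supp_fix st).
    by case=> [Bp|Dp]; [exact: (disjointP BC0 Bp Cp)|exact: (disjointP CD0 Cp Dp)].
  + exact: transferable_fixB.
Qed.

Lemma f_in_G g : G g -> G (f g).
Proof. by move=> Gg; case: (G_gen transferable_subgroup small_support_transferable Gg). Qed.

Lemma notin_range p : ~ range eps p <-> (B `\` delta @` B) p.
Proof.
split=> [nR|[Bp ndB] [q _ e]].
  split; first by apply: contrapT => /notB_CD /eps_CD e; apply: nR; exists p.
  by case=> q Bq e; apply: nR; exists q => //; rewrite eps_B.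
have Bq : B q by apply/eps_B_iff; rewrite e.
by apply: ndB; exists q; rewrite // -eps_B.
Qed.

Lemma clopen_notin_range : clopen (~` range eps).
Proof.
have -> : ~` range eps = B `\` delta @` B by apply/seteqP; split=> p /notin_range.
apply: clopenI; first exact: KB.1.
exact: (clopenC (delta @` B) (homeo_image_clopen (subgroup_homeo G_sub delta_D.1) KB.1)).
Qed.

(* eps is continuous piecewise on the clopen partition B, C u D. *)
Lemma clopen_eps_preimage (E : set CC) : clopen E -> clopen (eps @^-1` E).
Proof.
move=> clE; have [cdelta _] := subgroup_homeo G_sub delta_D.1.
have -> : eps @^-1` E = (B `&` delta @^-1` E) `|` (~` B `&` E).
  apply/seteqP; split=> q; rewrite /preimage /=.
    case: (pselect (B q)) => Bq; first by rewrite eps_B // => ?; left.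
    by rewrite eps_CD; [right|exact: notB_CD].
  by case=> [[Bq]|[nBq]]; [rewrite eps_B | rewrite eps_CD //; exact: notB_CD].
apply: clopenU; apply: clopenI => //; first exact: KB.1.
- exact: preimage_clopen.
- exact: (clopenC B KB.1).
Qed.

(* An element of G fixing the complement of R and a clopen set E with both
   E n R and R \ E non-empty is an image of f: after conjugating E over eps B
   by some f g, it fixes B and is its own image. *)
Lemma f_onto_fixing h (E : set CC) : G h -> (forall p, ~ range eps p -> h p = p) ->
  clopen E -> (exists q, E (eps q)) -> (exists q, ~ E (eps q)) ->
  (forall p, E p -> h p = p) -> exists2 g, G g & f g = h.
Proof.
move=> Gh hfix clE [q1 Eq1] [q0 nEq0] hE.
have [b0 nBb0] := (setTPn B).1 KB.2.2.
have [g Gg [_ gB]] := G_vig clopenT KB.1 (clopen_eps_preimage clE) KB.2.1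
  (ex_intro _ q1 Eq1) (properW (fun _ _ => I) I nBb0) (properW (fun _ _ => I) I nEq0).
have [gi Ggi [cg1 cg2]] := subgroup_inv G_sub Gg.
pose k := f gi \o h \o f g.
have Gk : G k by apply: subgroup_comp3 => //; exact: f_in_G.
have kB p : B p -> k p = p.
  move=> Bp; rewrite /k /=; case: (pselect (range eps p)) => [[q _ ep]|nR].
    have Bq : B q by apply/eps_B_iff; rewrite ep.
    rewrite -ep f_range hE; first by rewrite f_range cg1.
    by apply: gB; exists q.
  by rewrite f_off // hfix // f_off.
have [_ _ Gmul _] := G_sub.
exists (hmul (hmul gi k) g); first by apply: (Gmul) => //; apply: (Gmul).
rewrite 2!(f_mul f_range f_off) (f_fixB Gk kB); apply: funext => p.
by rewrite /hmul /k /= !(f_cancel f_range f_off cg2).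
Qed.

Lemma shrunk_part_nonempty : exists w, (B `\` delta @` B) w.
Proof.
apply: contrapT => none; apply: delta_B.2 => p Bp.
by apply: contrapT => ndp; apply: none; exists p.
Qed.

Lemma range_blocks p : range eps p -> (delta @` B) p \/ C p \/ D p.
Proof.
case=> q _ <-; case: (cover q) => [Bq|[Cq|Dq]].
- by left; rewrite eps_B //; exists q.
- by right; left; rewrite eps_CD //; left.
- by right; right; rewrite eps_CD //; right.
Qed.

Section Onto.
Variable h : CC -> CC.
Hypothesis h_pstab : pstab G (~` range eps) h.

(* If t fixes F u hF and sweeps (~ R) u E into ~ R, then h is the product of
   t^-1 h t (fixing E) and t^-1 h^-1 t h (fixing F), both images of f. *)
Lemma f_onto_factor (F E : set CC) z t :
  clopen F -> clopen E -> F `<=` range eps -> E `<=` range eps ->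
  F !=set0 -> E !=set0 -> range eps z -> ~ (E `|` F) z ->
  G t -> (forall p, (F `|` h @` F) p -> t p = p) ->
  t @` (~` range eps `|` E) `<=` ~` range eps -> exists2 g, G g & f g = h.
Proof.
move=> clF clE FR ER [pf Fpf] [pe Epe] [qz _ qzE] nz Gt tFhF tS.
have [Gh hfix] := h_pstab; have [hi Ghi [ch1 ch2]] := subgroup_inv G_sub Gh.
have hifix p : ~ range eps p -> hi p = p by move=> nR; rewrite -{1}(hfix p nR) ch1.
have [ti Gti [ct1 ct2]] := subgroup_inv G_sub Gt.
have tifix p : (F `|` h @` F) p -> ti p = p by move=> Pp; rewrite -{1}(tFhF p Pp) ct1.
have tNR p : (~` range eps `|` E) p -> ~ range eps (t p) by move=> Hp; apply: tS; exists p.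
have [_ _ Gmul _] := G_sub.
pose x := ti \o h \o t.
pose y := ti \o hi \o t \o h.
have [gx Ggx fgx] : exists2 g, G g & f g = x.
  have [q _ qE] := ER pe Epe.
  apply: (f_onto_fixing (E := E)) => //.
  - exact: subgroup_comp3.
  - by move=> p nR; rewrite /x /= hfix ?ct1 //; apply: tNR; left.
  - by exists q; rewrite qE.
  - by exists qz; rewrite qzE => Ez; apply: nz; left.
  - by move=> p Ep; rewrite /x /= hfix ?ct1 //; apply: tNR; right.
have [gy Ggy fgy] : exists2 g, G g & f g = y.
  have [q _ qF] := FR pf Fpf.
  apply: (f_onto_fixing (E := F)) => //.
  - by apply: (Gmul h) => //; exact: subgroup_comp3.
  - by move=> p nR; rewrite /y /= hfix // hifix ?ct1 //; apply: tNR; left.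
  - by exists q; rewrite qF.
  - by exists qz; rewrite qzE => Fz; apply: nz; right.
  - move=> p Fp; rewrite /y /= tFhF; last by right; exists p.
    by rewrite ch1 tifix //; left.
exists (hmul gy gx); first exact: Gmul.
rewrite (f_mul f_range f_off) fgx fgy.
by apply: funext => p; rewrite /hmul /x /y /= ct2 ch2 ct1.
Qed.

(* Vigour provides the sweeping element t of f_onto_factor, supported in the
   complement of F u hF. *)
Lemma f_onto_split (F E : set CC) z :
  clopen F -> clopen E -> F `<=` range eps -> E `<=` range eps ->
  F !=set0 -> E !=set0 -> range eps z -> ~ (E `|` F `|` h @` F) z ->
  (forall p, E p -> ~ (F `|` h @` F) p) -> exists2 g, G g & f g = h.
Proof.
move=> clF clE FR ER neF [pe Epe] Rz nz EF.
have [Gh hfix] := h_pstab; have [hi _ [ch1 _]] := subgroup_inv G_sub Gh.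
pose Ar := ~` (F `|` h @` F).
have clAr : clopen Ar :=
  clopenC (F `|` h @` F) (clopenU clF (homeo_image_clopen (subgroup_homeo G_sub Gh) clF)).
have NRAr : ~` range eps `<=` Ar.
  move=> p nR [Fp|[q Fq e]]; apply: nR; first exact: FR.
  by rewrite -e; exact: (fix_outside_stable ch1 hfix (FR q Fq)).
have EAr : E `<=` Ar := EF.
have Az : Ar z by move=> [Fz|hFz]; apply: nz; [left; right|right].
have NRE_Ar : ~` range eps `|` E `<` Ar.
  apply: (properW (p := z)) => //; first by move=> p [/NRAr|/EAr].
  by case=> [nRz|Ez]; [exact: nRz | apply: nz; do 2 left].
have NR_Ar : ~` range eps `<` Ar.
  apply: (properW (p := pe)) => //; first exact: EAr.
  by move=> nRpe; exact: nRpe (ER pe Epe).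
have [w /notin_range nRw] := shrunk_part_nonempty.
have [t Gt [st tS]] := G_vig clAr (clopenU clopen_notin_range clE) clopen_notin_range
  (ex_intro _ pe (or_intror Epe)) (ex_intro _ w nRw) NRE_Ar NR_Ar.
apply: (f_onto_factor (t := t) clF clE FR ER neF (ex_intro _ pe Epe) Rz) => //.
- by move=> [Ez|Fz]; apply: nz; left; [left|right].
- by move=> p FhFp; apply: (supp_fix st) => /(_ FhFp).
Qed.

(* Choice of F, E and z from blocks: F := Pa n h^-1 Pb with pa in Pa and h pa
   in Pb, E := Pk and z in Pl, the last two avoiding Pa and Pb. *)
Lemma f_onto_blocks (Pa Pb Pk Pl : set CC) pa z :
  clopen Pa -> clopen Pb -> clopen Pk ->
  Pa `<=` range eps -> Pk `<=` range eps -> Pl `<=` range eps ->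
  Pa pa -> Pb (h pa) -> Pk !=set0 -> Pl z ->
  (forall p, Pk p -> ~ (Pa `|` Pb `|` Pl) p) -> (forall p, Pl p -> ~ (Pa `|` Pb) p) ->
  exists2 g, G g & f g = h.
Proof.
move=> clA clB clK AR KR LR Apa Bhpa neK Lz Kout Lout.
have [hcont _] := subgroup_homeo G_sub h_pstab.1.
have hF p : (h @` (Pa `&` h @^-1` Pb)) p -> Pb p by case=> q [_ Bhq] <-.
apply: (f_onto_split (F := Pa `&` h @^-1` Pb) (E := Pk) (z := z)) => //.
- by apply: clopenI => //; exact: preimage_clopen.
- by move=> p [/AR].
- by exists pa.
- exact: LR.
- case=> [[Kz|[Az _]]|/hF Bz].
  + exact: (Kout z Kz (or_intror Lz)).
  + exact: (Lout z Lz (or_introl Az)).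
  + exact: (Lout z Lz (or_intror Bz)).
- by move=> p Kp [[Ap _]|/hF Bp]; apply: (Kout p Kp); left; [left|right].
Qed.

(* Choose the blocks according to which of delta B, C, D contains h pa, for
   pa in delta(B \ delta B). *)
Lemma f_onto : exists2 g, G g & f g = h.
Proof.
have [Gh hfix] := h_pstab; have homeo_delta := subgroup_homeo G_sub delta_D.1.
have [di _ [cd _]] := subgroup_inv G_sub delta_D.1.
have [hi _ [ch _]] := subgroup_inv G_sub Gh.
pose DB := delta @` B; pose Q1 := delta @` (B `\` DB); pose Q2 := delta @` DB.
have DB_B : DB `<=` B := delta_B.1.
have DB_R : DB `<=` range eps by move=> _ [q Bq <-]; exists q => //; rewrite eps_B.
have Q1DB : Q1 `<=` DB by move=> _ [q [Bq _] <-]; exists q.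
have Q1R : Q1 `<=` range eps by move=> p /Q1DB /DB_R.
have Q2DB : Q2 `<=` DB by move=> _ [q DBq <-]; exists q => //; exact: DB_B.
have Q2B : Q2 `<=` B by move=> p /Q2DB /DB_B.
have Q12 p : Q1 p -> ~ Q2 p.
  by move=> [q [_ nq] <-] [r DBr /(can_inj cd) rq]; apply: nq; rewrite -rq.
have C_R : C `<=` range eps by move=> p Cp; exists p => //; rewrite eps_CD //; left.
have D_R : D `<=` range eps by move=> p Dp; exists p => //; rewrite eps_CD //; right.
have BC := disjointP BC0; have BD := disjointP BD0; have CD := disjointP CD0.
have clDB : clopen DB := homeo_image_clopen homeo_delta KB.1.
have clQ1 : clopen Q1 := homeo_image_clopen homeo_delta (clopenI KB.1 (clopenC DB clDB)).
have clQ2 : clopen Q2 := homeo_image_clopen homeo_delta clDB.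
have [w Ww] := shrunk_part_nonempty.
have Q1w : Q1 (delta w) by exists w.
have [b Bb] := KB.2.1; have [c Cc] := KC_C.2.1; have [d Dd] := KD.2.1.
have Q2b : Q2 (delta (delta b)) by exists (delta b) => //; exists b.
have Rhw : range eps (h (delta w)) := fix_outside_stable ch hfix (DB_R _ (Q1DB _ Q1w)).
case: (range_blocks Rhw) => [DBh|[Ch|Dh]].
- apply: (f_onto_blocks (Pb := DB) (Pk := C) (Pl := D) (pa := delta w) (z := d) clQ1 clDB KC_C.1) => //.
  + by exists c.
  + by move=> p Cp [[/Q1DB/DB_B|/DB_B] Bp|Dp]; [exact: BC Bp Cp|exact: BC Bp Cp|exact: CD Cp Dp].
  + by move=> p Dp [/Q1DB/DB_B|/DB_B] Bp; exact: BD Bp Dp.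
- apply: (f_onto_blocks (Pb := C) (Pk := Q2) (Pl := D) (pa := delta w) (z := d) clQ1 KC_C.1 clQ2) => //.
  + by move=> p /Q2DB /DB_R.
  + by exists (delta (delta b)).
  + move=> p Q2p [[Q1p|Cp]|Dp]; [exact: Q12 Q1p Q2p|exact: BC (Q2B _ Q2p) Cp|exact: BD (Q2B _ Q2p) Dp].
  + by move=> p Dp [/Q1DB/DB_B Bp|Cp]; [exact: BD Bp Dp|exact: CD Cp Dp].
- apply: (f_onto_blocks (Pb := D) (Pk := Q2) (Pl := C) (pa := delta w) (z := c) clQ1 KD.1 clQ2) => //.
  + by move=> p /Q2DB /DB_R.
  + by exists (delta (delta b)).
  + move=> p Q2p [[Q1p|Dp]|Cp]; [exact: Q12 Q1p Q2p|exact: BD (Q2B _ Q2p) Dp|exact: BC (Q2B _ Q2p) Cp].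
  + by move=> p Cp [/Q1DB/DB_B Bp|Dp]; [exact: BC Bp Cp|exact: CD Cp Dp].
Qed.

End Onto.

End Lemma2p10.

Unset Implicit Arguments. Set Strict Implicit.

Theorem lemma2p10
  (G : set (CC -> CC)) (B C D : set CC) (delta eps : CC -> CC)
  (f : (CC -> CC) -> (CC -> CC)) :
  is_subgroup G -> vigorous G -> gen_by_small_support G ->
  KC B -> KC C -> KC D ->
  B `&` C = set0 -> B `&` D = set0 -> C `&` D = set0 ->
  B `|` C `|` D = setT ->
  pstab G D delta -> delta @` B `<` B ->
  (forall p, B p -> eps p = delta p) ->
  (forall p, (C `|` D) p -> eps p = p) ->
  (forall g q, f g (eps q) = eps (g q)) ->
  (forall g p, ~ range eps p -> f g p = p) ->
  [/\ forall g, G g -> pstab G (~` range eps) (f g),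
      (forall g h, G g -> G h -> f g = f h -> g = h),
      (forall h, pstab G (~` range eps) h -> exists2 g, G g & f g = h) &
      (forall g h, G g -> G h -> f (hmul g h) = hmul (f g) (f h))].
Proof.
move=> G_sub G_vig G_gen KB KC_C KD BC0 BD0 CD0 BCD delta_D delta_B
  eps_B eps_CD f_range f_off.
have eps_inj : injective eps := eps_inj G_sub BCD delta_D delta_B eps_B eps_CD.
have f_in_G := f_in_G G_sub G_vig G_gen KB KC_C KD BC0 BD0 CD0 BCD delta_D delta_B
  eps_B eps_CD f_range f_off.
have f_onto := f_onto G_sub G_vig G_gen KB KC_C KD BC0 BD0 CD0 BCD delta_D delta_B
  eps_B eps_CD f_range f_off.
split.
- by move=> g Gg; split; [exact: f_in_G | exact: f_off].
- by move=> g h _ _; exact: f_inj.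
- exact: f_onto.
- by move=> g h _ _; exact: f_mul.
Qed.
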